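(* The set $\{V(n)/\varphi(n) : n\ge1\}$ is dense in the interval $(1,+\infty)$; that is, every nonempty open subinterval of $(1,+\infty)$ contains an element of this set.
   Context: For a positive integer $n$, an integer $a$ is called regular modulo $n$ if there exists an integer $x$ with $a^2x\equiv a \pmod n$. Let $V(n)$ denote the number of integers $a$ with $1\le a\le n$ that are regular modulo $n$. (Known fact: $V$ is multiplicative, $V(1)=1$, and $V(p^{\alpha})=p^{\alpha}-p^{\alpha-1}+1$ for a prime $p$ and $\alpha\ge1$.) $\varphi$ is Euler's totient function. *)

From Stdlib Require Import ClassicalEpsilon.
From mathcomp Require Import all_boot all_order all_algebra.
Set Implicit Arguments. Unset Strict Implicit. Unset Printing Implicit Defensive.
Import GRing.Theory.

Definition regular (n : nat) (a : int) : Prop :=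
  exists x : int, (a ^+ 2 * x = a %[mod n%:Z])%Z.

Definition regularb (n : nat) (a : int) : bool :=
  if excluded_middle_informative (regular n a) then true else false.

Definition V (n : nat) : nat := count (fun a : nat => regularb n a%:Z) (iota 1 n).

From mathcomp Require Import all_boot all_order all_algebra.
Set Implicit Arguments. Unset Strict Implicit. Unset Printing Implicit Defensive.
Import GRing.Theory.

(* For squarefree n every residue is regular modulo n (use a Bezout coefficient of
   a against n / gcd(a, n)), so V(n) = n and V(n)/phi(n) = n/phi(n).  We therefore
   only look at the squarefree numbers P_N(M) = prod_{N < p <= M, p prime} p, whose
   ratio r_N(M) = P_N(M)/phi(P_N(M)) = prod p/(p-1) has two properties:
   - passing from M to M+1 multiplies r_N by 1 or by some p/(p-1) <= (N+1)/N;
   - r_N(M) is unbounded in M: r_0(M) = r_0(N) r_N(M), and r_0(M) >= H_M, the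
     harmonic number, because the products m*a with 1 <= m <= M, a < P_0(M) M!/m and
     a prime to P_0(M) are pairwise distinct and below P_0(M) M!; finally H_{2^k} >= k/2.
   Given 1 <= x < y, pick N with (N+1)/N < y/x.  The sequence r_N(M) starts at 1 <= x,
   grows by factors at most (N+1)/N and eventually exceeds x, so its first term above
   x lies in (x, y) (lemma first_crossing). *)

Definition squarefree (n : nat) : Prop := forall p, prime p -> ~~ (p * p %| n).

(* 0 is divisible by 2 * 2, so squarefree numbers are positive. *)
Lemma squarefree_gt0 n : squarefree n -> 0 < n.
Proof. by case: n => // /(_ 2 isT). Qed.

Lemma coprime_of_primes m n :
  0 < m -> (forall p, prime p -> p %| m -> ~~ (p %| n)) -> coprime m n.
Proof.
move=> m_gt0 no_common; rewrite /coprime eqn_leq gcdn_gt0 m_gt0 andbT leqNgt.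
apply/negP => /pdivP[p p_pr p_dvd_g].
have := no_common p p_pr (dvdn_trans p_dvd_g (dvdn_gcdl _ _)).
by rewrite (dvdn_trans p_dvd_g (dvdn_gcdr _ _)).
Qed.

(* For squarefree n, a is prime to the cofactor n / gcd(a, n): a prime dividing both
   would divide gcd(a, n) as well, so its square would divide n. *)
Lemma squarefree_coprime_cofactor n a :
  squarefree n -> coprime a (n %/ gcdn a n).
Proof.
move=> sqf_n; set g := gcdn a n; set m := n %/ g.
have n_eq : n = m * g by rewrite divnK // dvdn_gcdr.
have m_gt0 : 0 < m by move: (squarefree_gt0 sqf_n); rewrite n_eq muln_gt0 => /andP[].
rewrite coprime_sym; apply: coprime_of_primes => // p p_pr p_dvd_m.
apply: contraNN (sqf_n p p_pr) => p_dvd_a.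
have p_dvd_g : p %| g by rewrite dvdn_gcd p_dvd_a (dvdn_trans p_dvd_m) // n_eq dvdn_mulr.
by rewrite n_eq dvdn_mul.
Qed.

(* Every integer is regular modulo a squarefree n: if u a + v m = 1 with
   m = n / gcd(a, n), then a^2 u - a = - a v m is divisible by gcd(a, n) m = n. *)
Lemma squarefree_regular n (a : int) : squarefree n -> regular n a.
Proof.
move=> sqf_n; set g := gcdn `|a|%N n; set m := n %/ g.
have n_eq : n = (g * m)%N by rewrite mulnC divnK // dvdn_gcdr.
have /coprimezP[[u v] /= bezout] : coprimez a m%:Z.
  exact: squarefree_coprime_cofactor.
exists u; apply/eqP; rewrite eqz_mod_dvd.
have -> : (a ^+ 2 * u - a = a * (u * a - 1))%R.
  by rewrite mulrBr mulr1 expr2 -mulrA [(a * u)%R]mulrC.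
have -> : (u * a - 1 = - (v * m%:Z))%R.
  by rewrite -bezout opprD addrA subrr add0r.
by rewrite n_eq PoszM mulrN rpredN dvdz_mul ?dvdz_mull // dvdzE /= dvdn_gcdl.
Qed.

Lemma V_squarefree n : squarefree n -> V n = n.
Proof.
move=> sqf_n; rewrite /V -[in RHS](size_iota 1 n) -count_predT.
apply: eq_count => a; rewrite /regularb.
by case: ClassicalEpsilon.excluded_middle_informative => // -[]; apply: squarefree_regular.
Qed.

Fixpoint primeprod (N M : nat) : nat :=
  if M is M'.+1 then
    if (N < M) && prime M then primeprod N M' * M else primeprod N M'
  else 1.

Lemma primeprod_gt0 N M : 0 < primeprod N M.
Proof.
elim: M => //= M IH; case: ifP => // /andP[_ M_pr].
by rewrite muln_gt0 IH prime_gt0.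
Qed.

Lemma primeprod_small N M : M <= N -> primeprod N M = 1.
Proof.
by elim: M => //= M IH le_MN; rewrite ltnNge le_MN /= IH // ltnW.
Qed.

Lemma coprime_primeprod N M p : prime p -> M < p -> coprime p (primeprod N M).
Proof.
move=> p_pr; elim: M => [|M IH] /= lt_Mp; first exact: coprimen1.
have cop := IH (ltnW lt_Mp).
case: ifP => // /andP[_ M_pr]; rewrite coprimeMr cop prime_coprime //.
by rewrite dvdn_prime2 // gtn_eqF.
Qed.

Lemma dvdn_primeprod N M p : prime p -> N < p <= M -> p %| primeprod N M.
Proof.
move=> p_pr; elim: M => [|M IH] /andP[lt_Np].
  by rewrite leqn0 => /eqP p0; rewrite p0 in p_pr.
rewrite leq_eqVlt ltnS => /orP[/eqP p_eq | le_pM] /=.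
  by rewrite -p_eq lt_Np p_pr dvdn_mull.
by case: ifP => _; [apply: dvdn_mulr |]; rewrite IH // lt_Np.
Qed.

Lemma squarefree_primeprod N M : squarefree (primeprod N M).
Proof.
elim: M => [|M IH] q q_pr /=.
  by rewrite dvdn1 muln_eq1 andbb; apply: contraTN q_pr => /eqP->.
case: ifP => [/andP[_ M_pr]|_]; last exact: IH.
have cop : coprime M.+1 (primeprod N M) by apply: coprime_primeprod.
have [->|ne] := eqVneq q M.+1.
  by rewrite dvdn_pmul2r ?prime_gt0 // -prime_coprime.
by rewrite Gauss_dvdl ?IH // coprimeMl prime_coprime // dvdn_prime2 // ne.
Qed.

(* Residues prime to P are periodic modulo P: there are c phi(P) of them in [0, cP). *)
Lemma count_coprime_iota P c : count (coprime P) (iota 0 (P * c)) = c * totient P.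
Proof.
elim: c => [|c IH]; first by rewrite muln0.
rewrite mulnS addnC iotaD count_cat IH add0n -[P * c]addn0 iotaDl count_map.
rewrite mulSn addnC; congr (_ + _).
rewrite totient_count_coprime -sum1_count big_mkcond /index_iota subn0.
by apply: eq_bigr => i _; rewrite /= /coprime mulnC gcdnMDl; case: eqP.
Qed.

Lemma coprime_below P M m a :
  (forall p, prime p -> p <= M -> p %| P) -> coprime P a -> 0 < m <= M ->
  coprime m a.
Proof.
move=> dvd_P cop_Pa /andP[m_gt0 le_mM]; apply: coprime_of_primes => // p p_pr p_dvd_m.
have p_dvd_P : p %| P by apply: dvd_P; rewrite // (leq_trans (dvdn_leq m_gt0 p_dvd_m)).
by rewrite -prime_coprime // (coprime_dvdl p_dvd_P).
Qed.

(* The counting bound phi(P) * sum_{m <= M} K/m <= P K, when every prime up to M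
   divides P and every m <= M divides K: the products m * a with a prime to P and
   a < P K / m are pairwise distinct (a is prime to m' for every m' <= M) and all
   lie below P K. *)
Lemma totient_harmonic_bound P M K :
  (forall m, 0 < m <= M -> m %| K) -> (forall p, prime p -> p <= M -> p %| P) ->
  totient P * sumn [seq K %/ m | m <- iota 1 M] <= P * K.
Proof.
move=> dvd_K dvd_P.
pose cop_below m := filter (coprime P) (iota 0 (P * (K %/ m))).
pose L := [seq m * a | m <- iota 1 M, a <- cop_below m].
have mem_cop m a : a \in cop_below m = coprime P a && (a < P * (K %/ m)).
  by rewrite mem_filter mem_iota.
have L_uniq : uniq L.
  apply: allpairs_uniq_dep => [|m _|]; first exact: iota_uniq.
    by rewrite filter_uniq ?iota_uniq.
  move=> _ _ /allpairsPdep[m [a [m_in a_in ->]]] /allpairsPdep[m' [b [m'_in b_in ->]]] /=.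
  move: m_in m'_in a_in b_in; rewrite !mem_iota !add1n !ltnS !mem_cop.
  move=> m_range m'_range /andP[cop_a _] /andP[cop_b _] eq_mab.
  have cop_mb : coprime m b := coprime_below dvd_P cop_b m_range.
  have cop_m'a : coprime m' a := coprime_below dvd_P cop_a m'_range.
  have eq_mm' : m = m'.
    apply/eqP; rewrite eqn_dvd -(Gauss_dvdl _ cop_mb) -eq_mab dvdn_mulr //=.
    by rewrite -(Gauss_dvdl _ cop_m'a) eq_mab dvdn_mulr.
  subst m'; case/andP: m_range => m_gt0 _.
  by move/eqP: eq_mab; rewrite eqn_pmul2l // => /eqP->.
have L_sub : {subset L <= iota 0 (P * K)}.
  move=> _ /allpairsPdep[m [a [m_in a_in ->]]].
  move: m_in a_in; rewrite mem_iota add1n ltnS mem_cop => m_range /andP[_ lt_a].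
  have m_gt0 : 0 < m by case/andP: m_range.
  by rewrite mem_iota add0n -(divnK (dvd_K m m_range)) mulnA mulnC ltn_pmul2r.
have := uniq_leq_size L_uniq L_sub.
rewrite size_iota size_allpairs_dep.
suff -> : sumn [seq size (cop_below m) | m <- iota 1 M] =
          totient P * sumn [seq K %/ m | m <- iota 1 M] by [].
rewrite !sumnE !big_map big_distrr /=; apply: eq_bigr => m _.
by rewrite size_filter count_coprime_iota mulnC.
Qed.

From Stdlib Require Import Reals Lra.
Open Scope R_scope.

Lemma INR_muln (m n : nat) : INR (m * n) = INR m * INR n.
Proof. exact: mult_INR. Qed.

Definition phi_ratio (n : nat) : R := INR n / INR (totient n).

Lemma phi_ratio_gt0 n : (0 < n)%nat -> 0 < phi_ratio n.
Proof.
by move=> n_gt0; apply: Rdiv_pos_pos; apply: lt_0_INR; apply/ltP; rewrite ?totient_gt0.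
Qed.

Lemma phi_ratio1 : phi_ratio 1 = 1.
Proof. by rewrite /phi_ratio /= /totient /=; lra. Qed.

Lemma phi_ratioM m n : coprime m n -> phi_ratio (m * n) = phi_ratio m * phi_ratio n.
Proof.
move=> cop; rewrite /phi_ratio totient_coprime // !INR_muln /Rdiv Rinv_mult; ring.
Qed.

Lemma phi_ratio_prime_le p N :
  prime p -> (0 < N)%nat -> (N < p)%nat -> phi_ratio p <= INR N.+1 / INR N.
Proof.
move=> p_pr N_gt0 lt_Np; rewrite /phi_ratio totient_prime //.
have [q p_eq] : exists q, p = q.+1 by exists p.-1; rewrite prednK ?prime_gt0.
rewrite p_eq succnK; rewrite p_eq ltnS in lt_Np.
have N_pos : 0 < INR N by apply: lt_0_INR; apply/ltP.
have le_Nq : INR N <= INR q by apply: le_INR; apply/leP.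
rewrite !S_INR; apply: (Rmult_le_reg_r (INR q * INR N)); first nra.
by field_simplify; lra.
Qed.

Lemma phi_ratio_primeprodS N M :
  phi_ratio (primeprod N M.+1) =
  phi_ratio (primeprod N M) * (if (N < M.+1)%nat && prime M.+1 then phi_ratio M.+1 else 1).
Proof.
rewrite [primeprod N M.+1]/=; case: ifP => [/andP[_ M_pr]|_]; last by rewrite Rmult_1_r.
by rewrite phi_ratioM // coprime_sym coprime_primeprod.
Qed.

Lemma phi_ratio_primeprod_step N M : (0 < N)%nat ->
  phi_ratio (primeprod N M.+1) <= INR N.+1 / INR N * phi_ratio (primeprod N M).
Proof.
move=> N_gt0; rewrite phi_ratio_primeprodS Rmult_comm.
have pos := phi_ratio_gt0 (primeprod_gt0 N M).
apply: Rmult_le_compat_r; first lra.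
case: ifP => [/andP[lt_NM M_pr]|_]; first exact: phi_ratio_prime_le.
have N_pos : 0 < INR N by apply: lt_0_INR; apply/ltP.
by rewrite S_INR; apply: (Rmult_le_reg_r (INR N)); [lra | field_simplify; lra].
Qed.

Lemma phi_ratio_primeprod_split N M : (N <= M)%nat ->
  phi_ratio (primeprod 0 M) = phi_ratio (primeprod 0 N) * phi_ratio (primeprod N M).
Proof.
move/subnKC <-; elim: (M - N)%nat => [|k IH].
  by rewrite addn0 (primeprod_small (leqnn N)) phi_ratio1 Rmult_1_r.
by rewrite addnS !phi_ratio_primeprodS IH ltn0Sn [(N < _)%nat]ltnS leq_addr Rmult_assoc.
Qed.

Fixpoint harmonic (M : nat) : R := if M is M'.+1 then harmonic M' + / INR M else 0.

Lemma INR_sum_div_harmonic K M : (forall m, (0 < m <= M)%nat -> (m %| K)%nat) ->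
  INR (sumn [seq K %/ m | m <- iota 1 M]) = INR K * harmonic M.
Proof.
elim: M => [|M IH] dvd_K; first by rewrite /= Rmult_0_r.
rewrite -[M.+1]addn1 iotaD map_cat sumn_cat plus_INR IH; last first.
  by move=> m /andP[m_gt0 le_mM]; rewrite dvd_K // m_gt0 (leq_trans le_mM).
rewrite add1n /= addn0 addn1.
have M1_pos : 0 < INR M.+1 by apply: lt_0_INR; apply/ltP.
have K_eq : K = (K %/ M.+1 * M.+1)%nat by rewrite divnK // dvd_K ?leqnn.
rewrite {1 3}K_eq INR_muln; change (harmonic M.+1) with (harmonic M + / INR M.+1).
by field; lra.
Qed.

(* The counting bound with P = primeprod 0 M and K = M! gives H_M <= r_0(M). *)
Lemma harmonic_le_phi_ratio M : harmonic M <= phi_ratio (primeprod 0 M).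
Proof.
have dvd_fact m : (0 < m <= M)%nat -> (m %| M`!)%nat.
  by case/andP => m_gt0 le_mM; apply: dvdn_fact; rewrite m_gt0.
have dvd_primes p : prime p -> (p <= M)%nat -> (p %| primeprod 0 M)%nat.
  by move=> p_pr le_pM; rewrite dvdn_primeprod // prime_gt0.
have bound := le_INR _ _ (elimT leP (totient_harmonic_bound dvd_fact dvd_primes)).
rewrite !INR_muln INR_sum_div_harmonic // in bound.
have fact_pos : 0 < INR M`! by apply: lt_0_INR; apply/ltP; apply: fact_gt0.
have tot_pos : 0 < INR (totient (primeprod 0 M)).
  by apply: lt_0_INR; apply/ltP; rewrite totient_gt0 primeprod_gt0.
rewrite /phi_ratio; apply: (Rmult_le_reg_r (INR (totient (primeprod 0 M)) * INR M`!)).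
  exact: Rmult_lt_0_compat.
by field_simplify; nra.
Qed.

(* Each of the j terms 1/(M+i), i = 1..j, is at least 1/(M+j). *)
Lemma harmonic_shift M j : (0 < M)%nat ->
  harmonic M + INR j / INR (M + j) <= harmonic (M + j).
Proof.
move=> M_gt0; elim: j => [|j IH]; first by rewrite addn0 /Rdiv Rmult_0_l; lra.
rewrite addnS; change (harmonic (M + j).+1) with (harmonic (M + j) + / INR (M + j).+1).
have Mj_pos : 0 < INR (M + j) by apply: lt_0_INR; apply/ltP; rewrite addn_gt0 M_gt0.
have j_ge0 := pos_INR j.
have shrink : INR j / (INR (M + j) + 1) <= INR j / INR (M + j).
  by apply: Rmult_le_compat_l => //; apply: Rinv_le_contravar; lra.
have split_frac : (INR j + 1) / (INR (M + j) + 1) =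
                  INR j / (INR (M + j) + 1) + / (INR (M + j) + 1) by field; lra.
rewrite !S_INR; lra.
Qed.

Lemma harmonic_mono M j : harmonic M <= harmonic (M + j).
Proof.
elim: j => [|j IH]; first by rewrite addn0; lra.
rewrite addnS; change (harmonic (M + j).+1) with (harmonic (M + j) + / INR (M + j).+1).
have := Rinv_pos (INR (M + j).+1) (lt_0_INR _ (Nat.lt_0_succ _)); lra.
Qed.

Lemma harmonic_pow2 k : INR k / 2 <= harmonic (expn 2 k).
Proof.
elim: k => [|k IH]; first by rewrite /= /Rdiv Rmult_0_l; lra.
have pow_gt0 : (0 < expn 2 k)%nat by rewrite expn_gt0.
have pow_pos : 0 < INR (expn 2 k) by apply: lt_0_INR; apply/ltP.
have half : INR (expn 2 k) / INR (expn 2 k + expn 2 k) = / 2 by rewrite plus_INR; field; lra.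
have := harmonic_shift (expn 2 k) pow_gt0.
by rewrite expnS mul2n -addnn S_INR; lra.
Qed.

(* r_N(M) is unbounded in M, since r_0(N) r_N(M) = r_0(M) >= H_M. *)
Lemma phi_ratio_primeprod_unbounded N B : exists M, B < phi_ratio (primeprod N M).
Proof.
have r0N_pos := phi_ratio_gt0 (primeprod_gt0 0 N).
have [k lt_k] := INR_unbounded (2 * B * phi_ratio (primeprod 0 N)).
exists (expn 2 k + N)%nat.
have := harmonic_mono (expn 2 k) N.
have := phi_ratio_primeprod_split (leq_addl (expn 2 k) N).
have := harmonic_le_phi_ratio (expn 2 k + N).
have := harmonic_pow2 k.
move=> ? ? ? ?; apply: (Rmult_lt_reg_l (phi_ratio (primeprod 0 N))) => //; lra.
Qed.

Lemma first_crossing (u : nat -> R) (x q : R) (K : nat) :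
  u 0%nat <= x -> x < u K -> 0 <= q -> (forall k, u k.+1 <= q * u k) ->
  exists k, x < u k <= q * x.
Proof.
move=> u0_le lt_uK q_ge0 growth.
have below_or_found n : u n <= x \/ exists k, x < u k <= q * x.
  elim: n => [|n [le_un | found]]; [by left | | by right].
  have [le_un1 | lt_un1] := Rle_lt_dec (u n.+1) x; first by left.
  right; exists n.+1; split => //.
  by apply: Rle_trans (growth n) _; apply: Rmult_le_compat_l.
by case: (below_or_found K) => // le_uK; lra.
Qed.

Lemma succ_ratio_below (c : R) : 1 < c -> exists N, (0 < N)%nat /\ INR N.+1 / INR N < c.
Proof.
move=> one_lt_c; have [N [small N_gt0]] := archimed_cor1 (c - 1) ltac:(lra).
have N_pos : 0 < INR N by apply: lt_0_INR.
exists N; split; first exact/ltP.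
have -> : INR N.+1 / INR N = 1 + / INR N by rewrite S_INR; field; lra.
lra.
Qed.

Theorem proposition4 (x y : R) :
  1 <= x -> x < y ->
  exists n : nat, (0 < n)%nat /\ x < INR (V n) / INR (totient n) < y.
Proof.
move=> one_le_x lt_xy.
have [N [N_gt0 q_small]] : exists N, (0 < N)%nat /\ INR N.+1 / INR N < y / x.
  by apply: succ_ratio_below; apply: (Rmult_lt_reg_r x); [lra | field_simplify; lra].
pose u k := phi_ratio (primeprod N k).
have [M lt_xM] := phi_ratio_primeprod_unbounded N x.
have q_ge0 : 0 <= INR N.+1 / INR N.
  by apply: Rlt_le; apply: Rdiv_pos_pos; apply: lt_0_INR => //; apply/ltP.
have u0_le : u 0%nat <= x by rewrite /u /= phi_ratio1.
have [k [lt_xk le_kq]] := first_crossing u0_le lt_xM q_ge0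
  (fun k => phi_ratio_primeprod_step k N_gt0).
exists (primeprod N k); split; first exact: primeprod_gt0.
rewrite V_squarefree; last exact: squarefree_primeprod.
have qx_lt_y : INR N.+1 / INR N * x < y.
  have := Rmult_lt_compat_r x _ _ ltac:(lra) q_small.
  by replace (y / x * x) with y by (field; lra).
change (x < u k < y); lra.
Qed.
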